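(* Let $\psi:\mathbb R\to\mathbb R$ satisfy $-\log(1-x+x^2/2)\leq \psi(x)\leq \log(1+x+x^2/2)$ for all $x\in\mathbb R$. Let $Y\in\mathbb C^{d\times d}$ be a self-adjoint random matrix with finite second moments of entries, let $\theta>0$, and for a (deterministic) self-adjoint $S\in\mathbb C^{d\times d}$ let $X(S):=\psi(\theta(Y-S))$. Then for every self-adjoint $S$, \[ \Big\| S- \mathbb EY + \frac{1}{\theta}\mathbb E X(S) \Big\|\leq \frac{\theta}{2}\left\| \mathbb E(Y - S)^2 \right\|. \]
   Context: $\|\cdot\|$ is the operator norm. For a real function $f$ and a self-adjoint matrix $A=U\,\mathrm{diag}(\lambda_i)\,U^\ast$, $f(A):=U\,\mathrm{diag}(f(\lambda_i))\,U^\ast$. Expectations are entrywise. *)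

From HB Require Import structures.
From mathcomp Require Import all_boot all_order all_algebra.
From mathcomp Require Import sesquilinear spectral.
From mathcomp Require Import all_classical all_reals all_analysis.
From mathcomp.real_closed Require Import complex.

Set Implicit Arguments. Unset Strict Implicit. Unset Printing Implicit Defensive.
Import Order.TTheory GRing.Theory Num.Theory.
Local Open Scope ring_scope.
Local Open Scope classical_set_scope.

Section Defs.
Variable R : realType.
Local Notation C := (R[i]).

Definition adjmx {m n} (A : 'M[C]_(m, n)) : 'M[C]_(n, m) := (map_mx Num.conj A)^T.

Definition selfadj {d} (A : 'M[C]_d) : Prop := adjmx A = A.

Definition cplx_rV {d} (l : 'rV[R]_d) : 'rV[C]_d := map_mx (fun x => (x%:C)%C) l.

Definition spec_decomp {d} (A : 'M[C]_d) (U : 'M[C]_d) (l : 'rV[R]_d) : Prop :=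
  U \is unitarymx /\ A = U *m diag_mx (cplx_rV l) *m adjmx U.

(** Functional calculus f(A) := U diag(f l_i) U^* for a (chosen) spectral
    decomposition of A (exists whenever A is self-adjoint; the value is
    independent of the decomposition); 0 if no decomposition exists. *)
Definition fcalc {d} (f : R -> R) (A : 'M[C]_d) : 'M[C]_d :=
  match pselect (exists Ul : 'M[C]_d * 'rV[R]_d, spec_decomp A Ul.1 Ul.2) with
  | left h => let Ul := projT1 (cid h) in
              Ul.1 *m diag_mx (cplx_rV (map_mx f Ul.2)) *m adjmx Ul.1
  | right _ => 0
  end.

Definition vnorm {d} (v : 'cV[C]_d) : R :=
  Num.sqrt (\sum_i (complex.Re (v i 0) ^+ 2 + complex.Im (v i 0) ^+ 2)).

Definition opnorm {m n} (A : 'M[C]_(m, n)) : R :=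
  sup [set vnorm (A *m v) | v in [set v : 'cV[C]_n | vnorm v <= 1]].

Definition cexpect {dT} {T : measurableType dT} (P : probability T R)
  (X : T -> C) : C :=
  ((fine ('E_P[fun w => complex.Re (X w)]))%E +i* (fine ('E_P[fun w => complex.Im (X w)]))%E)%C.

Definition mexpect {dT} {T : measurableType dT} (P : probability T R) {m n}
  (X : T -> 'M[C]_(m, n)) : 'M[C]_(m, n) :=
  \matrix_(i, j) cexpect P (fun w => X w i j).

End Defs.

From HB Require Import structures.
From mathcomp Require Import all_boot all_order all_algebra.
From mathcomp Require Import sesquilinear spectral.
From mathcomp Require Import all_classical all_reals all_analysis.
From mathcomp.real_closed Require Import complex.
From mathcomp Require Import measurable_realfun ring lra.
Import Order.TTheory GRing.Theory Num.Theory.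
Local Open Scope ring_scope.

(* From log y <= y - 1, the hypothesis on psi gives |psi x - x| <= x^2/2.
   Diagonalising A = theta (Y - S), the functional calculus turns this into
   |<v, psi(A) v> - <v, A v>| <= <v, A^2 v> / 2 for every vector v.  Quadratic
   forms are linear in the entries, so taking expectations yields
   |<v, Z v>| <= theta/2 <v, E(Y - S)^2 v> for the self-adjoint matrix
   Z = S - EY + EX(S)/theta, and by polarization a self-adjoint matrix whose
   quadratic form is dominated by that of M has norm at most ||M||.  The same
   sandwich bound, with polarization recovering the entries of X(S) from its
   quadratic forms, shows that these entries are integrable. *)

Set Implicit Arguments. Unset Strict Implicit. Unset Printing Implicit Defensive.

Local Notation Re := complex.Re.
Local Notation Im := complex.Im.

Section Adjoint.
Variable R : realType.
Local Notation C := R[i].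

Lemma conjC_cplx (x : R) : Num.conj x%:C%C = x%:C%C.
Proof. exact: conjc_real. Qed.

Lemma adjmxD m n (A B : 'M[C]_(m, n)) : adjmx (A + B) = adjmx A + adjmx B.
Proof. by rewrite /adjmx map_mxD linearD. Qed.

Lemma adjmxN m n (A : 'M[C]_(m, n)) : adjmx (- A) = - adjmx A.
Proof. by apply/matrixP => i j; rewrite !mxE rmorphN. Qed.

Lemma adjmxZ m n c (A : 'M[C]_(m, n)) : adjmx (c *: A) = Num.conj c *: adjmx A.
Proof. by apply/matrixP => i j; rewrite !mxE rmorphM. Qed.

Lemma adjmxM m n p (A : 'M[C]_(m, n)) (B : 'M[C]_(n, p)) :
  adjmx (A *m B) = adjmx B *m adjmx A.
Proof. by rewrite /adjmx map_mxM trmx_mul. Qed.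

Lemma adjmxK m n (A : 'M[C]_(m, n)) : adjmx (adjmx A) = A.
Proof. by apply/matrixP => i j; rewrite !mxE conjCK. Qed.

Lemma adjmx_diag_real n (l : 'rV[R]_n) :
  adjmx (diag_mx (cplx_rV l)) = diag_mx (cplx_rV l).
Proof.
apply/matrixP => i j; rewrite !mxE eq_sym.
by case: eqP => [->|_]; rewrite ?mulr1n ?mulr0n ?conjC0 ?conjC_cplx.
Qed.

Lemma mul_adjmx_unitary n (U : 'M[C]_n) : U \is unitarymx -> adjmx U *m U = 1%:M.
Proof.
move=> /unitarymxP UU; apply: mulmx1C; rewrite -[RHS]UU; congr (_ *m _).
by apply/matrixP => i j; rewrite !mxE.
Qed.

Lemma selfadjD n (A B : 'M[C]_n) : selfadj A -> selfadj B -> selfadj (A + B).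
Proof. by rewrite /selfadj adjmxD => -> ->. Qed.

Lemma selfadjN n (A : 'M[C]_n) : selfadj A -> selfadj (- A).
Proof. by rewrite /selfadj adjmxN => ->. Qed.

Lemma selfadjZ n (a : R) (A : 'M[C]_n) : selfadj A -> selfadj (a%:C%C *: A).
Proof. by rewrite /selfadj adjmxZ conjC_cplx => ->. Qed.

Lemma selfadj_hermitian n (A : 'M[C]_n) : selfadj A -> A \is hermsymmx.
Proof.
move=> sa; rewrite is_hermitianmxE expr0 scale1r; apply/eqP.
by rewrite -{1}sa; apply/matrixP => i j; rewrite !mxE.
Qed.

End Adjoint.

Section Forms.
Variables (R : realType) (n : nat).
Local Notation C := R[i].
Implicit Types (u v : 'cV[C]_n) (A B : 'M[C]_n).

Definition sqmod (z : C) : R := Re z ^+ 2 + Im z ^+ 2.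

Definition sqnorm v : R := \sum_i sqmod (v i 0).

Definition form u A v : C := (adjmx u *m A *m v) 0 0.

Definition qform A v : R := Re (form v A v).

Lemma sqmod_ge0 z : 0 <= sqmod z.
Proof. by rewrite addr_ge0 ?sqr_ge0. Qed.

Lemma conjC_mul_sqmod z : Num.conj z * z = (sqmod z)%:C%C.
Proof.
rewrite /sqmod; case: z => a b; apply/eqP; rewrite eq_complex /=.
by apply/andP; split; apply/eqP; ring.
Qed.

Lemma sqnorm_ge0 v : 0 <= sqnorm v.
Proof. exact/sumr_ge0/(fun i _ => sqmod_ge0 _). Qed.

Lemma sqmod_le_sqnorm v i : sqmod (v i 0) <= sqnorm v.
Proof. by rewrite /sqnorm (bigD1 i) //= lerDl sumr_ge0 // => j _; exact: sqmod_ge0. Qed.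

Lemma sqnorm0 : sqnorm (0 : 'cV[C]_n) = 0.
Proof. by rewrite /sqnorm big1 // => i _; rewrite mxE /sqmod expr0n addr0. Qed.

Lemma sqnorm_eq0 v : sqnorm v = 0 -> v = 0.
Proof.
move=> v0; apply/matrixP => i j; rewrite ord1 mxE.
have : sqmod (v i 0) <= 0 by rewrite -v0 sqmod_le_sqnorm.
rewrite /sqmod; case: (v i 0) => a b /= ab0.
have := sqr_ge0 a; have := sqr_ge0 b => b2 a2.
have /eqP : a ^+ 2 = 0 by apply/eqP; rewrite eq_le a2 andbT; lra.
have /eqP : b ^+ 2 = 0 by apply/eqP; rewrite eq_le b2 andbT; lra.
by rewrite !sqrf_eq0 => /eqP -> /eqP ->.
Qed.

Lemma sqnormZ (s : R) v : sqnorm (s%:C%C *: v) = s ^+ 2 * sqnorm v.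
Proof.
rewrite /sqnorm mulr_sumr; apply: eq_bigr => i _; rewrite !mxE /sqmod.
by case: (v i 0) => a b /=; ring.
Qed.

Lemma sqnorm_parallelogram u v :
  sqnorm (u + v) + sqnorm (u - v) = 2 * sqnorm u + 2 * sqnorm v.
Proof.
rewrite /sqnorm !mulr_sumr -!big_split; apply: eq_bigr => i _ /=; rewrite !mxE /sqmod.
by case: (u i 0) => a b; case: (v i 0) => c d /=; ring.
Qed.

Lemma formE u A v : form u A v = \sum_i \sum_j Num.conj (u i 0) * A i j * v j 0.
Proof.
rewrite /form mxE exchange_big /=; apply: eq_bigr => j _; rewrite !mxE mulr_suml.
by apply: eq_bigr => i _; rewrite !mxE.
Qed.

Lemma formDl u1 u2 A v : form (u1 + u2) A v = form u1 A v + form u2 A v.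
Proof. by rewrite /form adjmxD !mulmxDl mxE. Qed.

Lemma formDr u A v1 v2 : form u A (v1 + v2) = form u A v1 + form u A v2.
Proof. by rewrite /form mulmxDr mxE. Qed.

Lemma formDm u A B v : form u (A + B) v = form u A v + form u B v.
Proof. by rewrite /form mulmxDr mulmxDl mxE. Qed.

Lemma formNl u A v : form (- u) A v = - form u A v.
Proof. by rewrite /form adjmxN !mulNmx mxE. Qed.

Lemma formNr u A v : form u A (- v) = - form u A v.
Proof. by rewrite /form mulmxN mxE. Qed.

Lemma formNm u A v : form u (- A) v = - form u A v.
Proof. by rewrite /form mulmxN mulNmx mxE. Qed.

Lemma formZl c u A v : form (c *: u) A v = Num.conj c * form u A v.
Proof. by rewrite /form adjmxZ -!scalemxAl mxE. Qed.

Lemma formZr c u A v : form u A (c *: v) = c * form u A v.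
Proof. by rewrite /form -scalemxAr mxE. Qed.

Lemma formZm c u A v : form u (c *: A) v = c * form u A v.
Proof. by rewrite /form -scalemxAr -scalemxAl mxE. Qed.

Lemma form_conj u A v : Num.conj (form u A v) = form v (adjmx A) u.
Proof.
have conj_entry (M : 'M[C]_1) : Num.conj (M 0 0) = adjmx M 0 0 by rewrite !mxE.
by rewrite /form conj_entry !adjmxM adjmxK mulmxA.
Qed.

Lemma form_delta A i j : form (delta_mx i 0) A (delta_mx j 0) = A i j.
Proof. by rewrite /form /adjmx map_delta_mx trmx_delta -rowE -colE !mxE. Qed.

Lemma form_conjmx u B A v :
  form u (B *m A *m adjmx B) v = form (adjmx B *m u) A (adjmx B *m v).
Proof. by rewrite /form adjmxM adjmxK !mulmxA. Qed.

Lemma form1_mulmx A v : form (A *m v) 1%:M (A *m v) = form v (adjmx A *m A) v.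
Proof. by rewrite /form adjmxM mulmx1 !mulmxA. Qed.

Lemma form1_self v : form v 1%:M v = (sqnorm v)%:C%C.
Proof.
rewrite /form mulmx1 mxE rmorph_sum; apply: eq_bigr => i _.
by rewrite !mxE conjC_mul_sqmod.
Qed.

Lemma Re_form1_le u v : 2 * Re (form u 1%:M v) <= sqnorm u + sqnorm v.
Proof.
rewrite /form mulmx1 mxE raddf_sum mulr_sumr -big_split; apply: ler_sum => i _ /=.
rewrite !mxE /sqmod; case: (u i 0) => a b; case: (v i 0) => c d /=.
have := sqr_ge0 (a - c); have := sqr_ge0 (b - d); by rewrite !sqrrB; lra.
Qed.

Lemma Re_form1_le_scaled (t : R) u v : 0 < t ->
  2 * Re (form u 1%:M v) <= t * sqnorm u + t^-1 * sqnorm v.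
Proof.
move=> t_gt0; have s_gt0 : 0 < Num.sqrt t by rewrite sqrtr_gt0.
have := Re_form1_le ((Num.sqrt t)%:C%C *: u) ((Num.sqrt t)^-1%:C%C *: v).
rewrite !sqnormZ formZl formZr conjC_cplx mulrA -rmorphM mulfV ?gt_eqF // mul1r.
by rewrite exprVn sqr_sqrtr // ltW.
Qed.

Lemma qformD A B v : qform (A + B) v = qform A v + qform B v.
Proof. by rewrite /qform formDm raddfD. Qed.

Lemma qformN A v : qform (- A) v = - qform A v.
Proof. by rewrite /qform formNm raddfN. Qed.

Lemma qformZ (a : R) A v : qform (a%:C%C *: A) v = a * qform A v.
Proof. by rewrite /qform formZm; case: (form _ _ _) => x y /=; ring. Qed.

Lemma qformE A v : qform A v = \sum_i \sum_j
  (Re (Num.conj (v i 0) * v j 0) * Re (A i j) - Im (Num.conj (v i 0) * v j 0) * Im (A i j)).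
Proof.
rewrite /qform formE raddf_sum; apply: eq_bigr => i _; rewrite raddf_sum.
apply: eq_bigr => j _; rewrite mulrAC.
by move: (Num.conj _ * _) (A i j) => [a b] [c d].
Qed.

Lemma sqnorm_mulmx A v : sqnorm (A *m v) = qform (adjmx A *m A) v.
Proof. by rewrite /qform -form1_mulmx form1_self. Qed.

Lemma qform_conj_diag U (l : 'rV[R]_n) v :
  qform (U *m diag_mx (cplx_rV l) *m adjmx U) v =
  \sum_i l 0 i * sqmod ((adjmx U *m v) i 0).
Proof.
rewrite /qform form_conjmx formE raddf_sum; apply: eq_bigr => i _.
rewrite (bigD1 i) //= big1 ?addr0 => [|j ji]; last first.
  by rewrite !mxE eq_sym (negbTE ji) mulr0n mulr0 mul0r.
by rewrite !mxE eqxx mulr1n mulrAC conjC_mul_sqmod -rmorphM /= mulrC.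
Qed.

Lemma normr_conjM_le (a b : C) :
  `|Re (Num.conj a * b)| <= (sqmod a + sqmod b) / 2 /\
  `|Im (Num.conj a * b)| <= (sqmod a + sqmod b) / 2.
Proof.
rewrite /sqmod !ler_norml; case: a => a1 a2; case: b => b1 b2 /=.
have := sqr_ge0 (a1 - b1); have := sqr_ge0 (a2 - b2); have := sqr_ge0 (a1 + b1).
have := sqr_ge0 (a2 + b2); have := sqr_ge0 (a1 - b2); have := sqr_ge0 (a2 + b1).
have := sqr_ge0 (a1 + b2); have := sqr_ge0 (a2 - b1); rewrite !sqrrB !sqrrD => *.
by split; apply/andP; split; lra.
Qed.

Lemma qform_le_entries A v : sqnorm v <= 1 ->
  `|qform A v| <= \sum_i \sum_j (`|Re (A i j)| + `|Im (A i j)|).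
Proof.
move=> v1; rewrite qformE; apply: le_trans (ler_norm_sum _ _ _) _; apply: ler_sum => i _.
apply: le_trans (ler_norm_sum _ _ _) _; apply: ler_sum => j _.
have [reC imC] := normr_conjM_le (v i 0) (v j 0).
have coord1 : (sqmod (v i 0) + sqmod (v j 0)) / 2 <= 1.
  by have := sqmod_le_sqnorm v i; have := sqmod_le_sqnorm v j; lra.
apply: le_trans (ler_normB _ _) _; rewrite !normrM.
by apply: lerD; rewrite -[leRHS]mul1r ler_wpM2r // (le_trans _ coord1).
Qed.

Lemma qform_polar Z a b : selfadj Z ->
  4 * Re (form a Z b) = qform Z (a + b) - qform Z (a - b).
Proof.
move=> sa; have ba : Re (form b Z a) = Re (form a Z b).
  by rewrite -{1}sa -form_conj; case: (form _ _ _).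
rewrite /qform !formDl !formDr !formNl !formNr opprK !raddfD !raddfN /= ba.
move: (Re (form a Z a)) (Re (form b Z b)) (Re (form a Z b)) => x y z; lra.
Qed.

Lemma selfadj_entry_qform X i j : selfadj X ->
  let: (e_i, e_j) := (delta_mx i 0, delta_mx j 0) in
  Re (X i j) = (qform X (e_i + e_j) - qform X e_i - qform X e_j) / 2 /\
  Im (X i j) = (qform X e_i + qform X e_j - qform X (e_i + 'i%C *: e_j)) / 2.
Proof.
move=> sa; have Xji : X j i = Num.conj (X i j) by rewrite -{1}sa !mxE.
rewrite /qform !(formDl, formDr, formZl, formZr) !form_delta Xji.
by case: (X i j) => a b; case: (X i i) => ? ?; case: (X j j) => ? ? /=; split; lra.
Qed.

End Forms.

Section FunctionalCalculus.
Variables (R : realType) (n : nat).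
Local Notation C := R[i].
Implicit Types (A M S : 'M[C]_n) (f g : R -> R).

Lemma selfadj_spec_decomp A : selfadj A -> exists U l, spec_decomp A U l.
Proof.
move=> /selfadj_hermitian hA; have /orthomx_spectralP eA := hermitian_normalmx hA.
have real_diag := hermitian_spectral_diag_real hA.
set V := spectralmx A in eA; set d := spectral_diag A in eA real_diag.
have Vu : V \is unitarymx by apply: spectral_unitarymx.
exists (adjmx V), (map_mx (@complex.Re R) d); split.
  have -> : adjmx V = (V ^t* )%sesqui by apply/matrixP => i j; rewrite !mxE.
  by rewrite trmxC_unitary.
rewrite adjmxK [LHS]eA (invmx_unitary Vu); congr (_ *m _ *m _).
  by apply/matrixP => i j; rewrite !mxE.
congr diag_mx; apply/matrixP => i j; rewrite !mxE RRe_real //.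
by move/mxOverP: real_diag; apply.
Qed.

Lemma fcalc_spec A : selfadj A -> exists U l, spec_decomp A U l /\
  forall f, fcalc f A = U *m diag_mx (cplx_rV (map_mx f l)) *m adjmx U.
Proof.
move=> /selfadj_spec_decomp [U0 [l0 dec0]]; rewrite /fcalc.
case: pselect => [ex|]; last by case; exists (U0, l0).
by case: (cid ex) => [[U l] /= dec]; exists U, l.
Qed.

Lemma fcalc_selfadj f A : selfadj A -> selfadj (fcalc f A).
Proof.
case/fcalc_spec => U [l [_ ->]].
by rewrite /selfadj !adjmxM adjmxK adjmx_diag_real mulmxA.
Qed.

Lemma qform_fcalc_le f g A v : selfadj A -> (forall x, f x <= g x) ->
  qform (fcalc f A) v <= qform (fcalc g A) v.
Proof.
case/fcalc_spec => U [l [_ fcalc_eq]] fg; rewrite !fcalc_eq !qform_conj_diag.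
by apply: ler_sum => i _; rewrite !mxE ler_wpM2r ?sqmod_ge0.
Qed.

Lemma fcalc_quadratic (a b : R) A : selfadj A ->
  fcalc (fun x => a * x + b * x ^+ 2) A = a%:C%C *: A + b%:C%C *: A ^+ 2.
Proof.
case/fcalc_spec => U [l [[Uu ->] ->]]; set D := diag_mx (cplx_rV l).
have -> : diag_mx (cplx_rV (map_mx (fun x => a * x + b * x ^+ 2) l)) =
    a%:C%C *: D + b%:C%C *: (D *m D).
  apply/matrixP => i j; rewrite mul_diag_mx !mxE.
  case: eqP => [->|_]; rewrite ?mulr1n ?mulr0n ?mulr0 ?addr0 //.
  by rewrite expr2 rmorphD !rmorphM.
have -> : (U *m D *m adjmx U) ^+ 2 = U *m (D *m D) *m adjmx U.
  rewrite [LHS](_ : _ = U *m D *m adjmx U *m (U *m D *m adjmx U)) ?expr2 //.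
  by rewrite !mulmxA -(mulmxA _ (adjmx U)) (mul_adjmx_unitary Uu) mulmx1.
by rewrite mulmxDr mulmxDl -!scalemxAr -!scalemxAl.
Qed.

Lemma qform_fcalc_near_id f A v : selfadj A -> (forall x, `|f x - x| <= x ^+ 2 / 2) ->
  `|qform (fcalc f A) v - qform A v| <= qform (A ^+ 2) v / 2.
Proof.
move=> sa near_id.
have lo_f x : 1 * x + (- 2^-1) * x ^+ 2 <= f x.
  by have := near_id x; rewrite ler_norml => /andP[]; lra.
have f_hi x : f x <= 1 * x + 2^-1 * x ^+ 2.
  by have := near_id x; rewrite ler_norml => /andP[]; lra.
have := qform_fcalc_le v sa lo_f; have := qform_fcalc_le v sa f_hi.
rewrite !fcalc_quadratic // !qformD !qformZ ler_norml.
move: (qform _ v) (qform A v) (qform (A ^+ 2) v) => c a b hi lo.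
by apply/andP; split; lra.
Qed.

Lemma qform_fcalc_shift_le f (theta : R) M S v :
  selfadj M -> selfadj S -> (forall x, `|f x - x| <= x ^+ 2 / 2) ->
  `|qform (fcalc f (theta%:C%C *: (M - S))) v - theta * (qform M v - qform S v)|
    <= theta ^+ 2 / 2 * qform ((M - S) ^+ 2) v.
Proof.
move=> Msa Ssa near_id; have sa := selfadjZ theta (selfadjD Msa (selfadjN Ssa)).
have sqZ : (theta%:C%C *: (M - S)) ^+ 2 = (theta ^+ 2)%:C%C *: (M - S) ^+ 2.
  by rewrite !expr2 -!mulmxE -scalemxAl -scalemxAr scalerA -rmorphM.
have := qform_fcalc_near_id v sa near_id.
by rewrite sqZ !qformZ qformD qformN mulrAC.
Qed.

End FunctionalCalculus.

Section OperatorNorm.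
Variables (R : realType) (n : nat).
Local Notation C := R[i].
Implicit Types (v x : 'cV[C]_n) (A M Z : 'M[C]_n).

Lemma vnormE v : vnorm v = Num.sqrt (sqnorm v).
Proof. by []. Qed.

Lemma vnorm_sqr v : vnorm v ^+ 2 = sqnorm v.
Proof. exact/sqr_sqrtr/sqnorm_ge0. Qed.

Lemma vnorm0 : vnorm (0 : 'cV[C]_n) = 0.
Proof. by rewrite vnormE sqnorm0 sqrtr0. Qed.

Lemma sqnorm_le1 v : vnorm v <= 1 -> sqnorm v <= 1.
Proof. by move=> v1; rewrite -vnorm_sqr -(expr1n R 2) lerXn2r ?nnegrE ?sqrtr_ge0. Qed.

Local Open Scope classical_set_scope.

Lemma opnorm_has_ubound A :
  has_ubound [set vnorm (A *m v) | v in [set v | vnorm v <= 1]].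
Proof.
set c := \sum_i \sum_j (`|Re ((adjmx A *m A) i j)| + `|Im ((adjmx A *m A) i j)|).
exists (1 + c) => _ [v /sqnorm_le1 v1 <-].
have c0 : 0 <= c by apply/sumr_ge0 => i _; apply/sumr_ge0 => j _; rewrite addr_ge0.
have Av : sqnorm (A *m v) <= c.
  by rewrite sqnorm_mulmx (le_trans (ler_norm _)) ?qform_le_entries.
rewrite vnormE -[1 + c]ger0_norm ?addr_ge0 // -sqrtr_sqr ler_sqrt ?sqr_ge0 //.
by rewrite sqrrD expr1n mul1r mulr2n; have := sqr_ge0 c; lra.
Qed.

Lemma vnorm_mulmx_le A v : vnorm v <= 1 -> vnorm (A *m v) <= opnorm A.
Proof. by move=> v1; apply: ub_le_sup (opnorm_has_ubound A) _ _; exists v. Qed.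

Lemma opnorm_ge0 A : 0 <= opnorm A.
Proof. by have := @vnorm_mulmx_le A 0; rewrite mulmx0 vnorm0; apply; exact: ler01. Qed.

Lemma opnorm_le A (k : R) :
  (forall v, vnorm v <= 1 -> vnorm (A *m v) <= k) -> opnorm A <= k.
Proof.
move=> Ak; apply: ge_sup; last by move=> _ [v v1 <-]; exact: Ak.
by exists (vnorm (A *m 0)), 0; rewrite //= vnorm0 ler01.
Qed.

Lemma sqnorm_mulmx_le A x : sqnorm (A *m x) <= opnorm A ^+ 2 * sqnorm x.
Proof.
have [/sqnorm_eq0 ->|x_neq0] := eqVneq (sqnorm x) 0; first by rewrite mulmx0 sqnorm0 mulr0.
set r := vnorm x; have r_gt0 : 0 < r by rewrite sqrtr_gt0 lt_def x_neq0 sqnorm_ge0.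
have y1 : vnorm (r^-1%:C%C *: x) <= 1.
  by rewrite vnormE sqnormZ -vnorm_sqr exprVn mulVf ?sqrtr1 // sqrf_eq0 gt_eqF.
have := vnorm_mulmx_le A y1; rewrite -scalemxAr => Ay.
have : sqnorm (r^-1%:C%C *: (A *m x)) <= opnorm A ^+ 2.
  by rewrite -vnorm_sqr lerXn2r ?nnegrE ?sqrtr_ge0 ?opnorm_ge0.
rewrite sqnormZ -(vnorm_sqr x) -/r exprVn => Ax.
have r2_gt0 : 0 < r ^+ 2 by rewrite exprn_gt0.
by rewrite -(mulVKf (lt0r_neq0 r2_gt0) (sqnorm (A *m x))) [leRHS]mulrC ler_wpM2l // ltW.
Qed.

Lemma qform_le_opnorm A x : qform A x <= opnorm A * sqnorm x.
Proof.
have qformE1 : qform A x = Re (form x 1%:M (A *m x)) by rewrite /qform /form mulmx1 mulmxA.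
have Ax := sqnorm_mulmx_le A x.
have [m0|m_neq0] := eqVneq (opnorm A) 0.
  move: Ax; rewrite m0 expr0n mul0r => Ax.
  have /sqnorm_eq0 Ax0 : sqnorm (A *m x) = 0 by apply/eqP; rewrite eq_le Ax sqnorm_ge0.
  by rewrite qformE1 Ax0 /form mulmx0 mxE.
have m_gt0 : 0 < opnorm A by rewrite lt_def m_neq0 opnorm_ge0.
have := Re_form1_le_scaled x (A *m x) m_gt0; rewrite -qformE1 => amgm.
have : (opnorm A)^-1 * sqnorm (A *m x) <= opnorm A * sqnorm x.
  by rewrite -(ler_pM2l m_gt0) mulrA mulfV ?gt_eqF // mul1r mulrA -expr2.
by have := sqnorm_ge0 x; lra.
Qed.

Lemma opnorm_le_qform Z M (c : R) : 0 <= c -> selfadj Z ->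
  (forall x, `|qform Z x| <= c * qform M x) -> opnorm Z <= c * opnorm M.
Proof.
move=> c_ge0 sa ZM; set m := opnorm M; have cm_ge0 : 0 <= c * m by rewrite mulr_ge0 ?opnorm_ge0.
have ZM' x : `|qform Z x| <= c * m * sqnorm x.
  by rewrite -mulrA (le_trans (ZM x)) // ler_wpM2l // qform_le_opnorm.
apply: opnorm_le => v /sqnorm_le1 v1; set z := Z *m v.
have [z0|z_neq0] := eqVneq (sqnorm z) 0; first by rewrite vnormE z0 sqrtr0.
set r := vnorm z; have r_gt0 : 0 < r by rewrite sqrtr_gt0 lt_def z_neq0 sqnorm_ge0.
set s := Num.sqrt r; have s_gt0 : 0 < s by rewrite sqrtr_gt0.
(* Polarize <z, Z v> = r^2 with a = z / sqrt r and b = sqrt r v: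
   4 r^2 <= c m (|a + b|^2 + |a - b|^2) = 2 c m (|a|^2 + |b|^2) <= 4 c m r. *)
set a := s^-1%:C%C *: z; set b := s%:C%C *: v.
have ab : Re (form a Z b) = r ^+ 2.
  rewrite formZl formZr conjC_cplx mulrA -rmorphM mulVf ?gt_eqF // mul1r /r vnorm_sqr.
  by rewrite -[sqnorm z]/(Re (sqnorm z)%:C%C) -form1_self /form mulmx1 mulmxA.
have na : sqnorm a = r.
  by rewrite sqnormZ exprVn (sqr_sqrtr (ltW r_gt0)) -vnorm_sqr -/r expr2 mulKf ?gt_eqF.
have nb : sqnorm b <= r by rewrite sqnormZ (sqr_sqrtr (ltW r_gt0)) ger_pMr.
have := qform_polar a b sa; rewrite ab => polar.
have : 4 * r ^+ 2 <= c * m * (sqnorm (a + b) + sqnorm (a - b)).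
  move: (ZM' (a + b)) (ZM' (a - b)); rewrite !ler_norml => /andP[_ h1] /andP[h2 _]; lra.
rewrite sqnorm_parallelogram na => h.
have : 4 * r ^+ 2 <= 4 * r * (c * m).
  by apply: le_trans h _; rewrite [leRHS]mulrC ler_wpM2l //; lra.
by rewrite expr2 mulrA ler_pM2l ?mulr_gt0.
Qed.

End OperatorNorm.

Section RealExpectation.
Context {dT : measure_display} {T : measurableType dT} {R : realType}.
Variable P : probability T R.
Local Notation L1 := (Lfun P 1).

Lemma Lfun2_of_integrable_sqr (f : T -> R) : measurable_fun setT f ->
  P.-integrable setT (EFin \o (fun w => f w ^+ 2)) -> f \in Lfun P 2%:E.
Proof.
move=> mf /integrableP[_ fint]; rewrite inE; apply/andP; split; first by rewrite inE.
rewrite inE /= /finite_norm unlock /Lnorm poweR_lty //.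
apply: le_lt_trans fint; rewrite le_eqVlt; apply/orP; left; apply/eqP.
by apply: eq_integral => w _; rewrite /= powR_mulrn // real_normK ?num_real // ger0_norm // sqr_ge0.
Qed.

Lemma Lfun1_dominated (f g h : T -> R) : measurable_fun setT f ->
  g \in L1 -> h \in L1 -> (forall w, `|f w - g w| <= h w) -> f \in L1.
Proof.
move=> mf g1 h1 fgh; have mg : measurable_fun setT g by case/andP: g1; rewrite inE.
suff fg1 : f - g \in L1 by rewrite -(subrK g f) rpredD.
apply/Lfun1_integrable/(le_integrable measurableT _ _ ((Lfun1_integrable _ _).1 h1)).
  exact/measurable_EFinP/measurable_funB.
by move=> w _; rewrite /= lee_fin (le_trans (fgh w)) // ler_norm.
Qed.

Lemma fine_expectationD (f g : T -> R) : f \in L1 -> g \in L1 ->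
  fine 'E_P[f + g] = fine 'E_P[f] + fine 'E_P[g].
Proof. by move=> f1 g1; rewrite -fineD ?expectation_fin_num // -expectationD. Qed.

Lemma fine_expectationB (f g : T -> R) : f \in L1 -> g \in L1 ->
  fine 'E_P[f - g] = fine 'E_P[f] - fine 'E_P[g].
Proof. by move=> f1 g1; rewrite -fineB ?expectation_fin_num // -expectationB. Qed.

Lemma fine_expectationZ (k : R) (f : T -> R) : f \in L1 ->
  fine 'E_P[k *: f] = k * fine 'E_P[f].
Proof.
move=> f1; rewrite -[k in RHS]/(fine k%:E) -fineM ?expectation_fin_num // -expectationZl //.
by congr (fine 'E_P[_]); apply/funext => w; exact: mulrC.
Qed.

Lemma fine_expectationN (f : T -> R) : f \in L1 -> fine 'E_P[- f] = - fine 'E_P[f].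
Proof. by move=> f1; rewrite -[RHS]mulN1r -fine_expectationZ // scaleN1r. Qed.

Lemma fine_expectation_cst (c : R) : fine 'E_P[cst c] = c.
Proof. by rewrite expectation_cst. Qed.

Lemma fine_expectation_sum (I : Type) (r : seq I) (F : I -> T -> R) :
  (forall i, F i \in L1) -> fine 'E_P[\sum_(i <- r) F i] = \sum_(i <- r) fine 'E_P[F i].
Proof.
move=> F1; elim: r => [|i r IHr]; first by rewrite !big_nil (fine_expectation_cst 0).
by rewrite !big_cons fine_expectationD ?IHr ?rpred_sum.
Qed.

Lemma fine_expectation_ge0 (f : T -> R) : (forall w, 0 <= f w) -> 0 <= fine 'E_P[f].
Proof. by move=> f0; rewrite fine_ge0 // expectation_ge0. Qed.

Lemma fine_expectation_normr_le (f g : T -> R) : f \in L1 -> g \in L1 ->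
  (forall w, `|f w| <= g w) -> `|fine 'E_P[f]| <= fine 'E_P[g].
Proof.
move=> f1 g1 fg.
have : 0 <= fine 'E_P[g - f].
  apply: fine_expectation_ge0 => w; change (0 <= g w - f w).
  by have := fg w; rewrite ler_norml => /andP[]; lra.
have : 0 <= fine 'E_P[f + g].
  apply: fine_expectation_ge0 => w; change (0 <= f w + g w).
  by have := fg w; rewrite ler_norml => /andP[]; lra.
rewrite fine_expectationB // fine_expectationD // ler_norml => *; apply/andP; split; lra.
Qed.

End RealExpectation.

Section RandomMatrices.
Context {dT : measure_display} {T : measurableType dT} {R : realType}.
Variables (P : probability T R) (n : nat).
Local Notation C := R[i].
Local Notation L1 := (Lfun P 1).
Implicit Types (X : T -> 'M[C]_n) (v : 'cV[C]_n).

Definition mx_measurable X := forall i j,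
  measurable_fun setT (fun w => Re (X w i j)) /\ measurable_fun setT (fun w => Im (X w i j)).

Definition mxLfun (p : \bar R) X := forall i j,
  (fun w => Re (X w i j)) \in Lfun P p /\ (fun w => Im (X w i j)) \in Lfun P p.

Lemma mxLfun_subset12 X : mxLfun 2%:E X -> mxLfun 1 X.
Proof.
have Pfin : P setT \is a fin_num := fin_num_measure P _ measurableT.
by move=> X2 i j; have [re2 im2] := X2 i j; split; rewrite (Lfun_subset12 Pfin).
Qed.

Lemma mxLfun_subr X (S : 'M[C]_n) : mxLfun 2%:E X -> mxLfun 2%:E (fun w => X w - S).
Proof.
move=> X2 i j; have [re2 im2] := X2 i j; split.
  rewrite (_ : (fun w => _) = (fun w => Re (X w i j)) - cst (Re (S i j))).
    by rewrite rpredB // ?lee_fin ?ler1n // => ?; exact: Lfun_cst.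
  by apply/funext => w; rewrite !mxE raddfB.
rewrite (_ : (fun w => _) = (fun w => Im (X w i j)) - cst (Im (S i j))).
  by rewrite rpredB // ?lee_fin ?ler1n // => ?; exact: Lfun_cst.
by apply/funext => w; rewrite !mxE raddfB.
Qed.

Lemma mxLfun1_sqr X : mxLfun 2%:E X -> mxLfun 1 (fun w => X w ^+ 2).
Proof.
move=> X2 i j; split.
  rewrite (_ : (fun w => _) = \sum_k ((fun w => Re (X w i k) * Re (X w k j)) -
                                       (fun w => Im (X w i k) * Im (X w k j)))).
    apply: rpred_sum => k _; have [? ?] := X2 i k; have [? ?] := X2 k j.
    by apply: rpredB; exact: Lfun2_mul_Lfun1.
  apply/funext => w; rewrite fct_sumE expr2 mxE raddf_sum; apply: eq_bigr => k _.
  rewrite [RHS]/(Re (X w i k) * Re (X w k j) - Im (X w i k) * Im (X w k j)).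
  by case: (X w i k) (X w k j) => [? ?] [? ?].
rewrite (_ : (fun w => _) = \sum_k ((fun w => Re (X w i k) * Im (X w k j)) +
                                     (fun w => Im (X w i k) * Re (X w k j)))).
  apply: rpred_sum => k _; have [? ?] := X2 i k; have [? ?] := X2 k j.
  by apply: rpredD; exact: Lfun2_mul_Lfun1.
apply/funext => w; rewrite fct_sumE expr2 mxE raddf_sum; apply: eq_bigr => k _.
rewrite [RHS]/(Re (X w i k) * Im (X w k j) + Im (X w i k) * Re (X w k j)).
by case: (X w i k) (X w k j) => [? ?] [? ?].
Qed.

Lemma qform_fun X v : (fun w => qform (X w) v) = \sum_i \sum_j
  (Re (Num.conj (v i 0) * v j 0) *: (fun w => Re (X w i j)) -
   Im (Num.conj (v i 0) * v j 0) *: (fun w => Im (X w i j))).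
Proof.
apply/funext => w; rewrite qformE fct_sumE; apply: eq_bigr => i _.
by rewrite fct_sumE.
Qed.

Lemma measurable_qform X v : mx_measurable X -> measurable_fun setT (fun w => qform (X w) v).
Proof.
move=> mX; suff : (fun w => qform (X w) v) \in mfun by rewrite inE.
rewrite qform_fun; apply: rpred_sum => i _; apply: rpred_sum => j _.
by have [mre mim] := mX i j; rewrite rpredB // rpredZ // inE.
Qed.

Lemma qform_Lfun1 X v : mxLfun 1 X -> (fun w => qform (X w) v) \in L1.
Proof.
move=> X1; rewrite qform_fun; apply: rpred_sum => i _; apply: rpred_sum => j _.
by have [re1 im1] := X1 i j; rewrite rpredB // rpredZ.
Qed.

Lemma qform_mexpect X v : mxLfun 1 X ->
  qform (mexpect P X) v = fine 'E_P[fun w => qform (X w) v].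
Proof.
move=> X1.
rewrite qformE qform_fun fine_expectation_sum => [|i]; last first.
  by apply: rpred_sum => j _; have [? ?] := X1 i j; rewrite rpredB // rpredZ.
apply: eq_bigr => i _; rewrite fine_expectation_sum => [|j]; last first.
  by have [? ?] := X1 i j; rewrite rpredB // rpredZ.
apply: eq_bigr => j _; have [re1 im1] := X1 i j.
by rewrite fine_expectationB ?rpredZ // !fine_expectationZ // !mxE.
Qed.

Lemma mexpect_selfadj X : mxLfun 1 X -> (forall w, selfadj (X w)) -> selfadj (mexpect P X).
Proof.
move=> X1 Xsa; apply/matrixP => i j; have [_ im1] := X1 j i.
have Xij w : X w i j = Num.conj (X w j i) by rewrite -{1}(Xsa w) !mxE.
rewrite !mxE /cexpect (_ : (fun w => Re (X w i j)) = fun w => Re (X w j i)); last first.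
  by apply/funext => w; rewrite Xij; case: (X w j i).
rewrite (_ : (fun w => Im (X w i j)) = - fun w => Im (X w j i)) ?fine_expectationN //.
by apply/funext => w; rewrite [RHS]/(- Im (X w j i)) Xij; case: (X w j i).
Qed.

Lemma mxLfun1_of_qform X : (forall w, selfadj (X w)) ->
  (forall v, (fun w => qform (X w) v) \in L1) -> mxLfun 1 X.
Proof.
move=> Xsa q1 i j; pose q v := fun w => qform (X w) v.
pose e k : 'cV[C]_n := delta_mx k 0.
split.
  rewrite (_ : (fun w => _) = 2^-1 *: (q (e i + e j) - q (e i) - q (e j))).
    by rewrite rpredZ // !rpredB //; exact: q1.
  by apply/funext => w; have [-> _] := selfadj_entry_qform i j (Xsa w); exact: mulrC.
rewrite (_ : (fun w => _) = 2^-1 *: (q (e i) + q (e j) - q (e i + 'i%C *: e j))).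
  by rewrite rpredZ // rpredB ?rpredD //; exact: q1.
by apply/funext => w; have [_ ->] := selfadj_entry_qform i j (Xsa w); exact: mulrC.
Qed.

Section QuadraticFormDeviation.
Variables (X Y Q : T -> 'M[C]_n) (S : 'M[C]_n) (theta : R).
Hypotheses (theta_gt0 : 0 < theta) (Y1 : mxLfun 1 Y) (Q1 : mxLfun 1 Q).
Hypothesis dev : forall v w,
  `|qform (X w) v - theta * (qform (Y w) v - qform S v)| <= theta ^+ 2 / 2 * qform (Q w) v.

Let shift_Lfun1 v : theta *: ((fun w => qform (Y w) v) - cst (qform S v)) \in L1.
Proof. by rewrite rpredZ // rpredB ?Lfun_cst ?qform_Lfun1. Qed.

Lemma mxLfun1_dominated : (forall w, selfadj (X w)) -> mx_measurable X -> mxLfun 1 X.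
Proof.
move=> Xsa mX; apply: mxLfun1_of_qform => // v.
apply: Lfun1_dominated (measurable_qform v mX) (shift_Lfun1 v) _ (dev v).
by rewrite rpredZ // qform_Lfun1.
Qed.

Lemma qform_mexpect_dev v : mxLfun 1 X ->
  `|qform (S - mexpect P Y + theta^-1%:C%C *: mexpect P X) v|
    <= theta / 2 * qform (mexpect P Q) v.
Proof.
move=> X1; rewrite !qformD qformN qformZ !qform_mexpect //.
have qX := qform_Lfun1 v X1; have qY := qform_Lfun1 v Y1; have qQ := qform_Lfun1 v Q1.
have : `|fine 'E_P[(fun w => qform (X w) v) -
                  theta *: ((fun w => qform (Y w) v) - cst (qform S v))]|
       <= fine 'E_P[theta ^+ 2 / 2 *: (fun w => qform (Q w) v)].
  by apply: fine_expectation_normr_le; rewrite ?rpredB ?shift_Lfun1 ?rpredZ //; exact: (dev v).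
rewrite fine_expectationB ?fine_expectationZ ?fine_expectationB ?fine_expectation_cst
  ?rpredB ?Lfun_cst //.
set EX := fine _; set EY := fine _; set EQ := fine _ => dev_E.
have theta_neq0 := lt0r_neq0 theta_gt0.
have -> : qform S v - EY + theta^-1 * EX = theta^-1 * (EX - theta * (EY - qform S v)) by field.
rewrite normrM gtr0_norm ?invr_gt0 //; apply: le_trans (ler_wpM2l _ dev_E) _.
  by rewrite invr_ge0 ltW.
by rewrite le_eqVlt; apply/orP; left; apply/eqP; field.
Qed.

End QuadraticFormDeviation.

End RandomMatrices.

Lemma psi_near_id (R : realType) (psi : R -> R) :
  (forall x, - ln (1 - x + x ^+ 2 / 2) <= psi x /\ psi x <= ln (1 + x + x ^+ 2 / 2)) ->
  forall x, `|psi x - x| <= x ^+ 2 / 2.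
Proof.
move=> psi_bounds x; have [lo hi] := psi_bounds x.
have := sqr_ge0 (x + 1); have := sqr_ge0 (x - 1).
rewrite sqrrB sqrrD expr1n mulr1 mulr2n => sqB sqD.
have lnD : ln (1 + (x + x ^+ 2 / 2)) <= x + x ^+ 2 / 2 by apply: le_ln1Dx; lra.
have lnB : ln (1 + (- x + x ^+ 2 / 2)) <= - x + x ^+ 2 / 2 by apply: le_ln1Dx; lra.
rewrite !addrA in lnD lnB; rewrite ler_norml; apply/andP; split; lra.
Qed.

Theorem lemmaB4 (R : realType) (dT : measure_display) (T : measurableType dT)
  (P : probability T R) (d : nat) (psi : R -> R)
  (Y : T -> 'M[R[i]]_d) (theta : R) (S : 'M[R[i]]_d) :
  (forall x : R, - ln (1 - x + x ^+ 2 / 2) <= psi x /\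
                 psi x <= ln (1 + x + x ^+ 2 / 2)) ->
  (forall w, selfadj (Y w)) ->
  (forall i j, measurable_fun setT (fun w => complex.Re (Y w i j)) /\
               measurable_fun setT (fun w => complex.Im (Y w i j))) ->
  (forall i j, P.-integrable setT (fun w => ((complex.Re (Y w i j)) ^+ 2)%:E) /\
               P.-integrable setT (fun w => ((complex.Im (Y w i j)) ^+ 2)%:E)) ->
  0 < theta ->
  selfadj S ->
  (forall i j,
     measurable_fun setT (fun w => complex.Re (fcalc psi (theta%:C%C *: (Y w - S)) i j)) /\
     measurable_fun setT (fun w => complex.Im (fcalc psi (theta%:C%C *: (Y w - S)) i j))) ->
  opnorm (S - mexpect P Y
          + theta^-1%:C%C *: mexpect P (fun w => fcalc psi (theta%:C%C *: (Y w - S))))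
  <= theta / 2 * opnorm (mexpect P (fun w => (Y w - S) ^+ 2)).
Proof.
move=> /psi_near_id psi_near Ysa Ymeas Ysq theta_gt0 Ssa Xmeas.
set X := fun w => fcalc psi (theta%:C%C *: (Y w - S)).
set Q := fun w => (Y w - S) ^+ 2.
have Y2 : mxLfun P 2%:E Y.
  move=> i j; have [mre mim] := Ymeas i j; have [ire iim] := Ysq i j.
  by split; exact: Lfun2_of_integrable_sqr.
have Y1 := mxLfun_subset12 Y2; have Q1 : mxLfun P 1 Q := mxLfun1_sqr (mxLfun_subr S Y2).
have Xsa w : selfadj (X w) by exact/fcalc_selfadj/selfadjZ/selfadjD/selfadjN.
have dev v w := qform_fcalc_shift_le theta v (Ysa w) Ssa psi_near.
have X1 : mxLfun P 1 X := mxLfun1_dominated Y1 Q1 dev Xsa Xmeas.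
apply: opnorm_le_qform; first by rewrite divr_ge0 // ltW.
  exact: selfadjD (selfadjD Ssa (selfadjN (mexpect_selfadj Y1 Ysa)))
                  (selfadjZ _ (mexpect_selfadj X1 Xsa)).
by move=> v; apply: qform_mexpect_dev.
Qed.
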